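(* For every nontrivial knot type $[K]$, $\mathrm{sps}[K]\le \mathrm{pl}[K]$.
   Context: A planar stick diagram of $[K]$ is a closed polygonal curve in the plane (finitely many straight line segments, called edges, joined end to end), whose self-intersections are transverse double points in the interiors of edges, with over/under crossing information at each self-intersection, representing $[K]$; $\mathrm{pl}[K]$ is the smallest number of edges in such a diagram. A spherical stick diagram of $[K]$ is a closed curve on the 2-sphere formed by finitely many arcs of great circles (not entire great circles) joined end to end, whose self-intersections are transverse double points away from the arc endpoints, with crossing information at each self-intersection, representing $[K]$. For nontrivial $[K]$, $\mathrm{sps}[K]$ is the minimum number of great circle arcs in such a diagram (undefined for the unknot). *)

From HB Require Import structures.
From mathcomp Require Import all_boot all_order all_algebra.
From mathcomp Require Import all_classical all_reals all_analysis.
Set Implicit Arguments. Unset Strict Implicit. Unset Printing Implicit Defensive.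
Import Order.TTheory GRing.Theory Num.Theory.
Import numFieldNormedType.Exports.
Local Open Scope ring_scope.
Local Open Scope classical_set_scope.

Section KnotDefs.
Variable R : realType.

Local Notation pt3 := (R * R * R)%type.
Local Notation pt2 := (R * R)%type.

Definition is_knot (K : set pt3) : Prop :=
  exists f : R -> pt3,
    continuous f /\ (forall t, f (t + 1) = f t) /\
    (forall s t, 0 <= s < 1 -> 0 <= t < 1 -> f s = f t -> s = t) /\
    range f = K.

Definition is_homeo (h : pt3 -> pt3) : Prop :=
  exists g : pt3 -> pt3, continuous h /\ continuous g /\
    cancel h g /\ cancel g h.

Definition ambient_isotopic (K1 K2 : set pt3) : Prop :=
  exists H : pt3 * R -> pt3,
    continuous H /\
    (forall t, 0 <= t <= 1 -> is_homeo (fun x => H (x, t))) /\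
    (forall x, H (x, 0) = x) /\
    [set H (x, 1) | x in K1] = K2.

Definition unknot : set pt3 :=
  [set p | p.1.1 ^+ 2 + p.1.2 ^+ 2 = 1 /\ p.2 = 0].

Definition nontrivial_knot (K : set pt3) : Prop :=
  is_knot K /\ ~ ambient_isotopic unknot K.

(* Vertices v 0, ..., v (n-1); edge i goes from v i to v ((i+1) mod n);
   a point of the curve is given by a parameter (i, s), i < n, 0 <= s < 1
   (s = 0 is the vertex v i). *)
Definition nxt (n i : nat) : nat := (i.+1 %% n)%N.

Definition pedge (n : nat) (v : nat -> pt2) (i : nat) (s : R) : pt2 :=
  ((1 - s) * (v i).1 + s * (v (nxt n i)).1,
   (1 - s) * (v i).2 + s * (v (nxt n i)).2).

Definition pdir (n : nat) (v : nat -> pt2) (i : nat) : pt2 :=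
  ((v (nxt n i)).1 - (v i).1, (v (nxt n i)).2 - (v i).2).

Definition det2 (a b : pt2) : R := a.1 * b.2 - a.2 * b.1.

Definition param (n : nat) (i : nat) (s : R) : Prop := (i < n)%N /\ 0 <= s < 1.

(* Closed polygonal curve with n edges whose self-intersections are
   transverse double points in the interiors of edges. *)
Definition planar_stick_curve (n : nat) (v : nat -> pt2) : Prop :=
  (0 < n)%N /\
  (forall i s j t, param n i s -> param n j t -> (i, s) <> (j, t) ->
      pedge n v i s = pedge n v j t ->
      [/\ 0 < s, 0 < t & det2 (pdir n v i) (pdir n v j) != 0]) /\
  (forall i s j t k u, param n i s -> param n j t -> param n k u ->
      (i, s) <> (j, t) -> (i, s) <> (k, u) -> (j, t) <> (k, u) ->
      ~ (pedge n v i s = pedge n v j t /\ pedge n v j t = pedge n v k u)).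

(* A planar stick diagram with n edges represents the knot type of K:
   there is a continuous height function h over the curve (the crossing
   information being which strand is higher at each crossing) such that
   the lifted curve (x, y, h) is embedded and has the knot type of K. *)
Definition planar_stick_diagram_of (K : set pt3) (n : nat) : Prop :=
  exists v : nat -> pt2, planar_stick_curve n v /\
  exists h : nat -> R -> R,
    (forall i, (i < n)%N -> {within `[0, 1], continuous (h i)}) /\
    (forall i, (i < n)%N -> h i 1 = h (nxt n i) 0) /\
    (forall i s j t, param n i s -> param n j t ->
       (pedge n v i s, h i s) = (pedge n v j t, h j t) -> (i, s) = (j, t)) /\
    ambient_isotopic
      [set x | exists i s, param n i s /\ x = (pedge n v i s, h i s)] K.

Definition add3 (a b : pt3) : pt3 := (a.1.1 + b.1.1, a.1.2 + b.1.2, a.2 + b.2).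
Definition scale3 (c : R) (a : pt3) : pt3 := (c * a.1.1, c * a.1.2, c * a.2).
Definition dot3 (a b : pt3) : R := a.1.1 * b.1.1 + a.1.2 * b.1.2 + a.2 * b.2.
Definition cross3 (a b : pt3) : pt3 :=
  (a.1.2 * b.2 - a.2 * b.1.2, a.2 * b.1.1 - a.1.1 * b.2,
   a.1.1 * b.1.2 - a.1.2 * b.1.1).

(* Arc i: s |-> cos(s a_i) p_i + sin(s a_i) w_i, s in [0,1], with p_i, w_i
   orthonormal and 0 < a_i < 2 pi (an arc of a great circle which is not
   the entire great circle). *)
Definition sarc (p w : nat -> pt3) (a : nat -> R) (i : nat) (s : R) : pt3 :=
  add3 (scale3 (cos (s * a i)) (p i)) (scale3 (sin (s * a i)) (w i)).

Definition stang (p w : nat -> pt3) (a : nat -> R) (i : nat) (s : R) : pt3 :=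
  add3 (scale3 (- sin (s * a i)) (p i)) (scale3 (cos (s * a i)) (w i)).

Definition spherical_stick_curve (n : nat) (p w : nat -> pt3) (a : nat -> R)
  : Prop :=
  (0 < n)%N /\
  (forall i, (i < n)%N ->
     [/\ dot3 (p i) (p i) = 1, dot3 (w i) (w i) = 1, dot3 (p i) (w i) = 0,
         0 < a i < 2 * pi & sarc p w a i 1 = p (nxt n i)]) /\
  (forall i s j t, param n i s -> param n j t -> (i, s) <> (j, t) ->
      sarc p w a i s = sarc p w a j t ->
      [/\ 0 < s, 0 < t & cross3 (stang p w a i s) (stang p w a j t) != (0, 0, 0)]) /\
  (forall i s j t k u, param n i s -> param n j t -> param n k u ->
      (i, s) <> (j, t) -> (i, s) <> (k, u) -> (j, t) <> (k, u) ->
      ~ (sarc p w a i s = sarc p w a j t /\ sarc p w a j t = sarc p w a k u)).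

(* A spherical stick diagram with n arcs represents the knot type of K:
   there is a continuous positive radius function r over the curve (the
   crossing information being which strand is farther from the centre) such
   that the radially lifted curve r * sigma is embedded and has the knot type
   of K. *)
Definition spherical_stick_diagram_of (K : set pt3) (n : nat) : Prop :=
  exists (p w : nat -> pt3) (a : nat -> R), spherical_stick_curve n p w a /\
  exists r : nat -> R -> R,
    (forall i, (i < n)%N -> {within `[0, 1], continuous (r i)}) /\
    (forall i s, (i < n)%N -> 0 <= s <= 1 -> 0 < r i s) /\
    (forall i, (i < n)%N -> r i 1 = r (nxt n i) 0) /\
    (forall i s j t, param n i s -> param n j t ->
       scale3 (r i s) (sarc p w a i s) = scale3 (r j t) (sarc p w a j t) ->
       (i, s) = (j, t)) /\
    ambient_isotopic
      [set x | exists i s, param n i s /\ x = scale3 (r i s) (sarc p w a i s)] K.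

End KnotDefs.

From HB Require Import structures.
From mathcomp Require Import all_boot all_order all_algebra.
From mathcomp Require Import all_classical all_reals all_analysis.
From mathcomp Require Import ring lra.
Set Implicit Arguments. Unset Strict Implicit. Unset Printing Implicit Defensive.
Import Order.TTheory GRing.Theory Num.Theory.
Import numFieldNormedType.Exports.
Local Open Scope ring_scope.
Local Open Scope classical_set_scope.

(* Put the plane at height 1 in R^3 and project it centrally onto the unit sphere
   (gnomonic projection).  A segment [z, z'] becomes the great-circle arc between the
   images of z and z', of angle less than pi, so an n-edge planar stick curve becomes
   an n-arc spherical curve with the same double points; transversality survives
   because the tangent of the arc at a point above q has a nonzero component along
   the segment, and the triple product with q recovers the planar determinant.
   For the crossing information, a point (p, h) of the planar lift is raised by a
   constant c making h + c >= 1 and sent to (h + c) (p, 1); this map ends an explicit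
   ambient isotopy, so the radial lift on the sphere has the knot type of K. *)

Section AmbientIsotopy.
Variable R : realType.
Local Notation pt3 := (R * R * R)%type.

Lemma continuous_pair (T U V : topologicalType) (f : T -> U) (g : T -> V) x :
  {for x, continuous f} -> {for x, continuous g} ->
  {for x, continuous (fun y => (f y, g y))}.
Proof. exact: cvg_pair. Qed.

Lemma continuous_fst (T U V : topologicalType) (f : T -> U * V) x :
  {for x, continuous f} -> {for x, continuous (fun y => (f y).1)}.
Proof. by move=> cf; apply: continuous_comp cf _; case: (f x) => a b; exact: cvg_fst. Qed.

Lemma continuous_snd (T U V : topologicalType) (f : T -> U * V) x :
  {for x, continuous f} -> {for x, continuous (fun y => (f y).2)}.
Proof. by move=> cf; apply: continuous_comp cf _; case: (f x) => a b; exact: cvg_snd. Qed.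

Lemma continuous_pt3 (T : topologicalType) (f g h : T -> R) x :
  {for x, continuous f} -> {for x, continuous g} -> {for x, continuous h} ->
  {for x, continuous (fun y => ((f y, g y, h y) : pt3))}.
Proof. by move=> cf cg ch; do 2 apply: continuous_pair => //. Qed.

Lemma is_homeo_comp (f g : pt3 -> pt3) :
  is_homeo f -> is_homeo g -> is_homeo (g \o f).
Proof.
move=> [f' [cf [cf' [ff' f'f]]]] [g' [cg [cg' [gg' g'g]]]].
exists (f' \o g'); split; last split.
- by move=> x; exact: continuous_comp (cf x) (cg _).
- by move=> x; exact: continuous_comp (cg' x) (cf' _).
- by split; [exact: can_comp | exact: can_comp].
Qed.

Lemma ambient_isotopic_trans (K1 K2 K3 : set pt3) :
  ambient_isotopic K1 K2 -> ambient_isotopic K2 K3 -> ambient_isotopic K1 K3.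
Proof.
move=> [E [cE [hE [E0 EK]]]] [H [cH [hH [H0 HK]]]].
exists (fun xt => H (E xt, xt.2)); split; last split; last split.
- move=> xt; apply: (continuous_comp (f := fun xt => (E xt, xt.2))); last exact: cH.
  by apply: continuous_pair; [exact: cE | apply: continuous_snd; exact: cvg_id].
- by move=> t ht; apply: (is_homeo_comp (hE t ht) (hH t ht)).
- by move=> x; rewrite E0 H0.
- by rewrite -HK -EK image_comp.
Qed.

(* Clamping the time makes every [push t] a homeomorphism, as the joint continuity
   required by [ambient_isotopic] is over all real times. *)
Definition clamp01 (t : R) : R := Num.min 1 (Num.max 0 t).

Lemma clamp01_itv t : 0 <= clamp01 t <= 1.
Proof. by rewrite /clamp01 le_min ler01 le_max lexx ge_min lexx. Qed.

Lemma clamp01_id t : 0 <= t <= 1 -> clamp01 t = t.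
Proof. by move=> /andP[t0 t1]; rewrite /clamp01 max_r // min_r. Qed.

Lemma continuous_clamp01 : continuous clamp01.
Proof.
move=> t; apply: continuous_min; first exact: cvg_cst.
by apply: continuous_max; [exact: cvg_cst | exact: cvg_id].
Qed.

Variable c : R.

Definition push_scale (t z : R) : R := 1 - clamp01 t + clamp01 t * Num.max 1 (z + c).

(* For [z + c >= 1], [push 1] sends [(x, y, z)] to [(z + c) * (x, y, 1)]. *)
Definition push (t : R) (X : pt3) : pt3 :=
  (X.1.1 * push_scale t X.2, X.1.2 * push_scale t X.2, X.2 + clamp01 t * c).

Definition unpush (t : R) (X : pt3) : pt3 :=
  (X.1.1 / push_scale t (X.2 - clamp01 t * c),
   X.1.2 / push_scale t (X.2 - clamp01 t * c), X.2 - clamp01 t * c).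

Lemma push_scale_gt0 t z : 0 < push_scale t z.
Proof.
have /andP[t0 t1] := clamp01_itv t.
have : 1 <= Num.max 1 (z + c) by rewrite le_max lexx.
rewrite /push_scale; nra.
Qed.

Lemma pushK t : cancel (push t) (unpush t).
Proof.
move=> [[x y] z]; rewrite /push /unpush /=.
have -> : z + clamp01 t * c - clamp01 t * c = z by ring.
by rewrite !mulfK // gt_eqF // push_scale_gt0.
Qed.

Lemma unpushK t : cancel (unpush t) (push t).
Proof.
move=> [[x y] z]; rewrite /push /unpush /= !divfK ?gt_eqF ?push_scale_gt0 //.
by congr (_, _, _); ring.
Qed.

Lemma continuous_push_scale (T : topologicalType) (tt zz : T -> R) x :
  {for x, continuous tt} -> {for x, continuous zz} ->
  {for x, continuous (fun y => push_scale (tt y) (zz y))}.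
Proof.
move=> ct cz.
have cc : {for x, continuous (fun y => clamp01 (tt y))}.
  by apply: continuous_comp ct _; exact: continuous_clamp01.
apply: continuousD; first by apply: continuousB => //; exact: cvg_cst.
apply: continuousM => //; apply: continuous_max; first exact: cvg_cst.
by apply: continuousD => //; exact: cvg_cst.
Qed.

Lemma continuous_push t : continuous (push t).
Proof.
move=> X.
have cz : {for X, continuous (fun Y : pt3 => Y.2)} by apply: continuous_snd; exact: cvg_id.
have cs : {for X, continuous (fun Y : pt3 => push_scale t Y.2)}.
  by apply: continuous_push_scale cz; exact: cvg_cst.
apply: (@continuous_pt3 pt3).
- by apply: continuousM _ cs; do 2 apply: continuous_fst; exact: cvg_id.
- by apply: continuousM _ cs; apply: continuous_snd; apply: continuous_fst; exact: cvg_id.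
- by apply: continuousD cz _; exact: cvg_cst.
Qed.

Lemma continuous_unpush : continuous (fun Xt : pt3 * R => unpush Xt.2 Xt.1).
Proof.
move=> Xt.
have ct : {for Xt, continuous (fun Yt : pt3 * R => clamp01 Yt.2)}.
  by apply: continuous_comp _ _; [apply: continuous_snd; exact: cvg_id | exact: continuous_clamp01].
have cz : {for Xt, continuous (fun Yt : pt3 * R => Yt.1.2 - clamp01 Yt.2 * c)}.
  apply: continuousB; first by apply: continuous_snd; apply: continuous_fst; exact: cvg_id.
  by apply: continuousM ct _; exact: cvg_cst.
have cs : {for Xt, continuous (fun Yt : pt3 * R =>
    (push_scale Yt.2 (Yt.1.2 - clamp01 Yt.2 * c))^-1)}.
  apply: continuousV; first by rewrite gt_eqF ?push_scale_gt0.
  by apply: continuous_push_scale cz; apply: continuous_snd; exact: cvg_id.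
apply: (@continuous_pt3 (pt3 * R)%type) => //.
- by apply: continuousM _ cs; do 3 apply: continuous_fst; exact: cvg_id.
- by apply: continuousM _ cs; apply: continuous_snd; do 2 apply: continuous_fst; exact: cvg_id.
Qed.

Lemma ambient_isotopic_push (L : set pt3) : ambient_isotopic (push 1 @` L) L.
Proof.
exists (fun Xt => unpush Xt.2 Xt.1); split; last split; last split.
- exact: continuous_unpush.
- move=> t _; exists (push t); split; last split.
  + move=> X; apply: (continuous_comp (f := fun X => (X, t))
      (g := fun Xt : pt3 * R => unpush Xt.2 Xt.1)); last exact: continuous_unpush.
    by apply: continuous_pair; [exact: cvg_id | exact: cvg_cst].
  + exact: continuous_push.
  + by split; [exact: unpushK | exact: pushK].
- have clamp0 : clamp01 0 = 0 by rewrite clamp01_id // lexx ler01.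
  by case=> [[x y] z]; rewrite /unpush /push_scale /= clamp0 !mul0r !subr0 addr0 !divr1.
- by rewrite image_comp (eq_imagel (f' := id)) ?image_id // => X _; exact: pushK.
Qed.

End AmbientIsotopy.

Section Gnomonic.
Variable R : realType.
Local Notation pt3 := (R * R * R)%type.
Local Notation pt2 := (R * R)%type.

Definition homog (z : pt2) : pt3 := (z.1, z.2, 1).
Definition norm3 (X : pt3) : R := Num.sqrt (dot3 X X).
Definition gnomonic (z : pt2) : pt3 := scale3 (norm3 (homog z))^-1 (homog z).
Definition arc_angle (z z' : pt2) : R := acos (dot3 (gnomonic z) (gnomonic z')).
Definition arc_dir (z z' : pt2) : pt3 :=
  scale3 (sin (arc_angle z z'))^-1
    (add3 (gnomonic z') (scale3 (- cos (arc_angle z z')) (gnomonic z))).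

Lemma dot3_homog z : dot3 (homog z) (homog z) = z.1 ^+ 2 + z.2 ^+ 2 + 1.
Proof. by rewrite /dot3 /=; ring. Qed.

Lemma dot3_homog_ge1 z : 1 <= dot3 (homog z) (homog z).
Proof. by rewrite dot3_homog; have := sqr_ge0 z.1; have := sqr_ge0 z.2; lra. Qed.

Lemma norm3_homog_gt0 z : 0 < norm3 (homog z).
Proof. by rewrite /norm3 sqrtr_gt0; have := dot3_homog_ge1 z; lra. Qed.

Lemma norm3_homog_sqr z : norm3 (homog z) ^+ 2 = dot3 (homog z) (homog z).
Proof. by rewrite /norm3 sqr_sqrtr //; have := dot3_homog_ge1 z; lra. Qed.

Lemma dot3_comb (x y : pt3) a b c d :
  dot3 (add3 (scale3 a x) (scale3 b y)) (add3 (scale3 c x) (scale3 d y)) =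
  a * c * dot3 x x + (a * d + b * c) * dot3 x y + b * d * dot3 y y.
Proof. by rewrite /dot3 /add3 /scale3 /=; ring. Qed.

Lemma dot3_combr (x y w : pt3) a b :
  dot3 x (add3 (scale3 a y) (scale3 b w)) = a * dot3 x y + b * dot3 x w.
Proof. by rewrite /dot3 /add3 /scale3 /=; ring. Qed.

Lemma gnomonic_unit z : dot3 (gnomonic z) (gnomonic z) = 1.
Proof.
have := norm3_homog_sqr z; have := norm3_homog_gt0 z.
rewrite /gnomonic /dot3 /=; move: (norm3 _) => N N0 NE.
have N0' : N != 0 by rewrite gt_eqF.
transitivity ((z.1 * z.1 + z.2 * z.2 + 1 * 1) / N ^+ 2); first by field.
by rewrite NE divff // -NE expf_neq0.
Qed.

Lemma dot3_gnomonic z z' : dot3 (gnomonic z) (gnomonic z') =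
  dot3 (homog z) (homog z') / (norm3 (homog z) * norm3 (homog z')).
Proof.
have := norm3_homog_gt0 z; have := norm3_homog_gt0 z'.
by rewrite /gnomonic /dot3 /= => h0 h1; field; rewrite !gt_eqF.
Qed.

(* Lagrange's identity: distinct points of the plane lift to non-parallel vectors. *)
Lemma dot3_gnomonic_sqr_lt1 z z' : z != z' -> dot3 (gnomonic z) (gnomonic z') ^+ 2 < 1.
Proof.
move=> hz; rewrite dot3_gnomonic expr_div_n exprMn !norm3_homog_sqr.
have h0 := dot3_homog_ge1 z; have h1 := dot3_homog_ge1 z'.
rewrite ltr_pdivrMr ?mul1r; last by apply: mulr_gt0; lra.
have lagrange :
    dot3 (homog z) (homog z) * dot3 (homog z') (homog z') - dot3 (homog z) (homog z') ^+ 2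
   = (z.2 - z'.2) ^+ 2 + (z'.1 - z.1) ^+ 2 + (z.1 * z'.2 - z.2 * z'.1) ^+ 2.
  by rewrite /dot3 /=; ring.
rewrite -subr_gt0 lagrange.
have : 0 < (z.2 - z'.2) ^+ 2 + (z'.1 - z.1) ^+ 2.
  case: z z' hz {h0 h1 lagrange} => [a b] [c d] hz /=.
  have [bd|bd] := eqVneq b d.
    subst d; have ca : c - a != 0 by rewrite subr_eq0; apply: contraNneq _ hz => ->.
    by rewrite subrr expr0n /= add0r lt_neqAle sqr_ge0 andbT eq_sym sqrf_eq0.
  have : 0 < (b - d) ^+ 2 by rewrite lt_neqAle sqr_ge0 andbT eq_sym sqrf_eq0 subr_eq0.
  by have := sqr_ge0 (c - a); lra.
by have := sqr_ge0 (z.1 * z'.2 - z.2 * z'.1); lra.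
Qed.

(* Spherical linear interpolation in the lifted basis: the arc from [gnomonic z] to
   [gnomonic z'] at time [s] is [arc_wt0 s * homog z + arc_wt1 s * homog z'], and
   [tan_wt0], [tan_wt1] give its unit tangent in the same basis. *)
Definition arc_wt0 (z z' : pt2) (s : R) : R :=
  sin (arc_angle z z' - s * arc_angle z z') / (norm3 (homog z) * sin (arc_angle z z')).
Definition arc_wt1 (z z' : pt2) (s : R) : R :=
  sin (s * arc_angle z z') / (norm3 (homog z') * sin (arc_angle z z')).
Definition tan_wt0 (z z' : pt2) (s : R) : R :=
  - cos (arc_angle z z' - s * arc_angle z z') / (norm3 (homog z) * sin (arc_angle z z')).
Definition tan_wt1 (z z' : pt2) (s : R) : R :=
  cos (s * arc_angle z z') / (norm3 (homog z') * sin (arc_angle z z')).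

Definition seg (z z' : pt2) (t : R) : pt2 :=
  ((1 - t) * z.1 + t * z'.1, (1 - t) * z.2 + t * z'.2).
Definition seg_dir (z z' : pt2) : pt3 := (z'.1 - z.1, z'.2 - z.2, 0).
(* The parameter on [seg z z'] of the point lying below the arc at time [s]. *)
Definition arc_to_seg (z z' : pt2) (s : R) : R :=
  arc_wt1 z z' s / (arc_wt0 z z' s + arc_wt1 z z' s).
Definition tan_seg_coef (z z' : pt2) (s : R) : R :=
  tan_wt1 z z' s * (1 - arc_to_seg z z' s) - tan_wt0 z z' s * arc_to_seg z z' s.

Section Edge.
Variables z z' : pt2.
Hypothesis zz' : z != z'.
Local Notation a := (arc_angle z z').
Local Notation u := (gnomonic z).
Local Notation u' := (gnomonic z').
Local Notation N := (norm3 (homog z)).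
Local Notation N' := (norm3 (homog z')).

Lemma dot3_gnomonic_itv : -1 < dot3 u u' < 1.
Proof. by have := dot3_gnomonic_sqr_lt1 zz'; rewrite expr2 => ?; apply/andP; split; nra. Qed.

Lemma arc_angle_itv : 0 < a < pi.
Proof.
have /andP[h1 h2] := dot3_gnomonic_itv.
by rewrite /arc_angle acos_gt0 ?acos_ltpi //; apply/andP; split; lra.
Qed.

Lemma cos_arc_angle : cos a = dot3 u u'.
Proof.
have /andP[h1 h2] := dot3_gnomonic_itv.
by rewrite /arc_angle acosK // in_itv /=; apply/andP; split; lra.
Qed.

Lemma sin_arc_angle_gt0 : 0 < sin a.
Proof. exact/sin_gt0_pi/arc_angle_itv. Qed.

Let sa0 : sin a != 0. Proof. by rewrite gt_eqF // sin_arc_angle_gt0. Qed.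
Let N0 : N != 0. Proof. by rewrite gt_eqF // norm3_homog_gt0. Qed.
Let N'0 : N' != 0. Proof. by rewrite gt_eqF // norm3_homog_gt0. Qed.

Lemma arc_dirE :
  arc_dir z z' = add3 (scale3 (- dot3 u u' / sin a) u) (scale3 (sin a)^-1 u').
Proof. by rewrite /arc_dir cos_arc_angle /add3 /scale3 /=; congr (_, _, _); ring. Qed.

Lemma arc_dir_unit : dot3 (arc_dir z z') (arc_dir z z') = 1.
Proof.
rewrite arc_dirE dot3_comb !gnomonic_unit.
apply: (@mulfI _ (sin a ^+ 2)); first by rewrite expf_neq0.
by rewrite mulr1 {2}sin2cos2 cos_arc_angle; field.
Qed.

Lemma gnomonic_arc_dir_orth : dot3 u (arc_dir z z') = 0.
Proof. by rewrite arc_dirE dot3_combr gnomonic_unit; field. Qed.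

Lemma arc_end : add3 (scale3 (cos a) u) (scale3 (sin a) (arc_dir z z')) = u'.
Proof.
rewrite arc_dirE cos_arc_angle; move: (dot3 u u') => c.
by rewrite /gnomonic /add3 /scale3 /=; congr (_, _, _); field; rewrite ?sa0 ?N0 ?N'0.
Qed.

Lemma arcE s :
  add3 (scale3 (cos (s * a)) u) (scale3 (sin (s * a)) (arc_dir z z')) =
  add3 (scale3 (arc_wt0 z z' s) (homog z)) (scale3 (arc_wt1 z z' s) (homog z')).
Proof.
rewrite arc_dirE /arc_wt0 /arc_wt1 sinB cos_arc_angle; move: (dot3 u u') => c.
by rewrite /gnomonic /add3 /scale3 /=; congr (_, _, _); field; rewrite ?sa0 ?N0 ?N'0.
Qed.

Lemma tangentE s :
  add3 (scale3 (- sin (s * a)) u) (scale3 (cos (s * a)) (arc_dir z z')) =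
  add3 (scale3 (tan_wt0 z z' s) (homog z)) (scale3 (tan_wt1 z z' s) (homog z')).
Proof.
rewrite arc_dirE /tan_wt0 /tan_wt1 cosB cos_arc_angle; move: (dot3 u u') => c.
by rewrite /gnomonic /add3 /scale3 /=; congr (_, _, _); field; rewrite ?sa0 ?N0 ?N'0.
Qed.

Lemma arc_wt0_ge0 s : 0 <= s <= 1 -> 0 <= arc_wt0 z z' s.
Proof.
move=> /andP[s0 s1]; have /andP[a0 api] := arc_angle_itv.
apply: divr_ge0; last by rewrite mulr_ge0 ?ltW ?norm3_homog_gt0 ?sin_arc_angle_gt0.
by apply: sin_ge0_pi; apply/andP; split; nra.
Qed.

Lemma arc_wt0_gt0 s : 0 <= s < 1 -> 0 < arc_wt0 z z' s.
Proof.
move=> /andP[s0 s1]; have /andP[a0 api] := arc_angle_itv.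
apply: divr_gt0; last by rewrite mulr_gt0 ?norm3_homog_gt0 ?sin_arc_angle_gt0.
by apply: sin_gt0_pi; apply/andP; split; nra.
Qed.

Lemma arc_wt1_ge0 s : 0 <= s <= 1 -> 0 <= arc_wt1 z z' s.
Proof.
move=> /andP[s0 s1]; have /andP[a0 api] := arc_angle_itv.
apply: divr_ge0; last by rewrite mulr_ge0 ?ltW ?norm3_homog_gt0 ?sin_arc_angle_gt0.
by apply: sin_ge0_pi; apply/andP; split; nra.
Qed.

Lemma arc_wt1_gt0 s : 0 < s <= 1 -> 0 < arc_wt1 z z' s.
Proof.
move=> /andP[s0 s1]; have /andP[a0 api] := arc_angle_itv.
apply: divr_gt0; last by rewrite mulr_gt0 ?norm3_homog_gt0 ?sin_arc_angle_gt0.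
by apply: sin_gt0_pi; apply/andP; split; nra.
Qed.

Lemma arc_wt_sum_gt0 s : 0 <= s <= 1 -> 0 < arc_wt0 z z' s + arc_wt1 z z' s.
Proof.
move=> /andP[s0 s1]; have [->|s_neq1] := eqVneq s 1.
  by rewrite ltr_pwDr ?arc_wt0_ge0 ?arc_wt1_gt0 ?lexx ?ltr01 ?ler01.
have s_lt1 : s < 1 by rewrite lt_neqAle s_neq1.
by rewrite ltr_pwDl ?arc_wt1_ge0 ?arc_wt0_gt0 ?s0 ?s1.
Qed.

Lemma arc_wt0_1 : arc_wt0 z z' 1 = 0.
Proof. by rewrite /arc_wt0 mul1r subrr sin0 mul0r. Qed.

Lemma arc_wt1_0 : arc_wt1 z z' 0 = 0.
Proof. by rewrite /arc_wt1 mul0r sin0 mul0r. Qed.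

Lemma arc_wt0_0 : arc_wt0 z z' 0 = N^-1.
Proof. by rewrite /arc_wt0 mul0r subr0; field; rewrite sa0 N0. Qed.

Lemma arc_wt1_1 : arc_wt1 z z' 1 = N'^-1.
Proof. by rewrite /arc_wt1 mul1r; field; rewrite sa0 N'0. Qed.

(* [arc_wt0 s * arc_wt1 s' - arc_wt0 s' * arc_wt1 s] is a positive multiple of
   [sin ((s' - s) a)]. *)
Lemma arc_wt_cross_inj s s' : 0 <= s <= 1 -> 0 <= s' <= 1 ->
  arc_wt0 z z' s * arc_wt1 z z' s' = arc_wt0 z z' s' * arc_wt1 z z' s -> s = s'.
Proof.
move=> /andP[s0 s1] /andP[t0 t1] e.
have cross : sin (s' * a - s * a) / (N * sin a * N') =
    arc_wt0 z z' s * arc_wt1 z z' s' - arc_wt0 z z' s' * arc_wt1 z z' s.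
  by rewrite /arc_wt0 /arc_wt1 !sinB; field; rewrite ?sa0 ?N0 ?N'0.
have {cross} sin0 : sin (s' * a - s * a) = 0.
  have den : N * sin a * N' != 0 by rewrite !mulf_neq0.
  by move/eqP: cross; rewrite e subrr mulf_eq0 invr_eq0 (negbTE den) orbF => /eqP.
have /andP[a0 api] := arc_angle_itv.
have [lt|gt|//] := ltgtP s s'.
  have : 0 < sin (s' * a - s * a) by apply: sin_gt0_pi; apply/andP; split; nra.
  by rewrite sin0 ltxx.
have : 0 < sin (s * a - s' * a) by apply: sin_gt0_pi; apply/andP; split; nra.
by rewrite -opprB sinN sin0 oppr0 ltxx.
Qed.

Lemma tangent_unit s :
  dot3 (add3 (scale3 (- sin (s * a)) u) (scale3 (cos (s * a)) (arc_dir z z')))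
       (add3 (scale3 (- sin (s * a)) u) (scale3 (cos (s * a)) (arc_dir z z'))) = 1.
Proof.
rewrite dot3_comb gnomonic_unit gnomonic_arc_dir_orth arc_dir_unit.
by have := cos2sin2 (s * a); rewrite !expr2 => e; lra.
Qed.

Lemma tangent_arc_orth s :
  dot3 (add3 (scale3 (- sin (s * a)) u) (scale3 (cos (s * a)) (arc_dir z z')))
       (add3 (scale3 (cos (s * a)) u) (scale3 (sin (s * a)) (arc_dir z z'))) = 0.
Proof. by rewrite dot3_comb gnomonic_unit gnomonic_arc_dir_orth arc_dir_unit; ring. Qed.

Section ArcToSeg.
Variable s : R.
Hypothesis s01 : 0 <= s <= 1.
Local Notation w0 := (arc_wt0 z z' s).
Local Notation w1 := (arc_wt1 z z' s).
Local Notation t := (arc_to_seg z z' s).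

Let wsum_neq0 : w0 + w1 != 0. Proof. by rewrite gt_eqF // arc_wt_sum_gt0. Qed.

Lemma arc_segE :
  add3 (scale3 w0 (homog z)) (scale3 w1 (homog z')) = scale3 (w0 + w1) (homog (seg z z' t)).
Proof. by rewrite /arc_to_seg /add3 /scale3 /=; congr (_, _, _); field. Qed.

Lemma tangent_segE :
  add3 (scale3 (tan_wt0 z z' s) (homog z)) (scale3 (tan_wt1 z z' s) (homog z')) =
  add3 (scale3 (tan_wt0 z z' s + tan_wt1 z z' s) (homog (seg z z' t)))
       (scale3 (tan_seg_coef z z' s) (seg_dir z z')).
Proof. by rewrite /tan_seg_coef /arc_to_seg /add3 /scale3 /=; congr (_, _, _); field. Qed.

Lemma arc_to_seg_ge0 : 0 <= t.
Proof. by rewrite divr_ge0 ?arc_wt1_ge0 // ltW // arc_wt_sum_gt0. Qed.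

Lemma arc_to_seg_le1 : t <= 1.
Proof.
have := arc_wt_sum_gt0 s01; have := arc_wt0_ge0 s01.
by rewrite /arc_to_seg => ? ?; rewrite ler_pdivrMr // mul1r; lra.
Qed.

Lemma arc_to_seg_lt1 : s < 1 -> t < 1.
Proof.
move=> s1; have := arc_wt_sum_gt0 s01.
have : 0 < w0 by apply: arc_wt0_gt0; case/andP: s01 => -> _.
by rewrite /arc_to_seg => ? ?; rewrite ltr_pdivrMr // mul1r; lra.
Qed.

(* The unit tangent is orthogonal to the radius [w0 + w1] * [homog (seg t)], so it has a
   nonzero component along the segment. *)
Lemma tan_seg_coef_neq0 : tan_seg_coef z z' s != 0.
Proof.
apply/negP => /eqP m0.
have T1 := tangent_unit s; have T0 := tangent_arc_orth s.
rewrite tangentE tangent_segE m0 in T1 T0; rewrite arcE arc_segE in T0.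
move: T1 T0; set l := _ + tan_wt1 _ _ _; set X := homog _ => T1 T0.
have k0 := arc_wt_sum_gt0 s01.
have X1 : 1 <= dot3 X X by exact: dot3_homog_ge1.
have e1 : dot3 (add3 (scale3 l X) (scale3 0 (seg_dir z z')))
    (add3 (scale3 l X) (scale3 0 (seg_dir z z'))) = l * l * dot3 X X.
  by rewrite /dot3 /add3 /scale3 /=; ring.
have e2 : dot3 (add3 (scale3 l X) (scale3 0 (seg_dir z z'))) (scale3 (w0 + w1) X) =
    l * (w0 + w1) * dot3 X X.
  by rewrite /dot3 /add3 /scale3 /=; ring.
rewrite e1 in T1; rewrite e2 in T0.
have l0 : l = 0.
  move/eqP: T0; rewrite !mulf_eq0 (gt_eqF k0) orbF => /orP[/eqP //|/eqP X0].
  by move: X1; rewrite X0; lra.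
by move: T1; rewrite l0 !mul0r => /eqP; rewrite eq_sym oner_eq0.
Qed.

End ArcToSeg.

Lemma arc_to_seg0 : arc_to_seg z z' 0 = 0.
Proof. by rewrite /arc_to_seg arc_wt1_0 mul0r. Qed.

Lemma arc_to_seg1 : arc_to_seg z z' 1 = 1.
Proof. by rewrite /arc_to_seg arc_wt0_1 add0r divff // arc_wt1_1 invr_eq0. Qed.

Lemma arc_to_seg_inj s s' : 0 <= s <= 1 -> 0 <= s' <= 1 ->
  arc_to_seg z z' s = arc_to_seg z z' s' -> s = s'.
Proof.
move=> s01 s'01; rewrite /arc_to_seg => e; apply: arc_wt_cross_inj => //.
have k0 := arc_wt_sum_gt0 s01; have k'0 := arc_wt_sum_gt0 s'01.
move/eqP: e; rewrite eqr_div ?(gt_eqF k0) ?(gt_eqF k'0) // => /eqP.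
move: (arc_wt0 z z' s) (arc_wt1 z z' s) (arc_wt0 z z' s') (arc_wt1 z z' s') => p q p' q' e.
have -> : p * q' = p' * q + (q' * (p + q) - q * (p' + q')) by ring.
by rewrite e subrr addr0.
Qed.

End Edge.

Lemma dot3_cross_homog (q d d' : pt2) l m l' m' :
  dot3 (cross3 (add3 (scale3 l (homog q)) (scale3 m (d.1, d.2, 0)))
               (add3 (scale3 l' (homog q)) (scale3 m' (d'.1, d'.2, 0)))) (homog q)
  = m * m' * det2 d d'.
Proof. by rewrite /dot3 /cross3 /add3 /scale3 /det2 /=; ring. Qed.

Lemma continuous_arc_wt0 z z' (x : R) : {for x, continuous (arc_wt0 z z')}.
Proof.
rewrite /arc_wt0; apply: continuousM; last exact: cvg_cst.
apply: (continuous_comp (f := fun y : R => arc_angle z z' - y * arc_angle z z')).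
  by apply: continuousB; [exact: cvg_cst | apply: continuousM; [exact: cvg_id | exact: cvg_cst]].
exact: continuous_sin.
Qed.

Lemma continuous_arc_wt1 z z' (x : R) : {for x, continuous (arc_wt1 z z')}.
Proof.
rewrite /arc_wt1; apply: continuousM; last exact: cvg_cst.
apply: (continuous_comp (f := fun y : R => y * arc_angle z z')); last exact: continuous_sin.
by apply: continuousM; [exact: cvg_id | exact: cvg_cst].
Qed.

Lemma continuous_arc_to_seg z z' s : z != z' -> 0 <= s <= 1 ->
  {for s, continuous (arc_to_seg z z')}.
Proof.
move=> zz' s01; rewrite /arc_to_seg; apply: continuousM; first exact: continuous_arc_wt1.
apply: continuousV; first by rewrite gt_eqF // arc_wt_sum_gt0.
by apply: continuousD; [exact: continuous_arc_wt0 | exact: continuous_arc_wt1].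
Qed.

End Gnomonic.

Section SphericalCurve.
Variable R : realType.
Local Notation pt3 := (R * R * R)%type.
Local Notation pt2 := (R * R)%type.

Lemma scale3_homog_inj (k k' : R) (q q' : pt2) : k != 0 ->
  scale3 k (homog q) = scale3 k' (homog q') -> q = q'.
Proof.
case: q q' => [x y] [x' y'] k0; rewrite /scale3 /= !mulr1 => -[e1 e2 kk'].
by rewrite -kk' in e1 e2; rewrite (mulfI k0 e1) (mulfI k0 e2).
Qed.

Lemma planar_edge_neq (n : nat) (v : nat -> pt2) : planar_stick_curve n v ->
  forall i, (i < n)%N -> v i != v (nxt n i).
Proof.
move=> [_ [transverse _]] i ilt; apply/eqP => e.
have p0 : param n i (0 : R) by split; rewrite ?lexx ?ltr01.
have p1 : param n i (2^-1 : R) by split; rewrite ?invr_ge0 ?ler0n ?invf_lt1 ?ltr1n.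
have ne : (i, 0) <> (i, 2^-1) :> nat * R by case=> /esym /eqP; rewrite invr_eq0 pnatr_eq0.
have ee : pedge n v i 0 = pedge n v i 2^-1 by rewrite /pedge -e; congr (_, _); ring.
by have [] := transverse _ _ _ _ p0 p1 ne ee; rewrite ltxx.
Qed.

Variables (n : nat) (v : nat -> pt2).
Hypothesis edge_neq : forall i, (i < n)%N -> v i != v (nxt n i).

Definition sph_pt (i : nat) : pt3 := gnomonic (v i).
Definition sph_dir (i : nat) : pt3 := arc_dir (v i) (v (nxt n i)).
Definition sph_angle (i : nat) : R := arc_angle (v i) (v (nxt n i)).
Definition seg_time (i : nat) (s : R) : R := arc_to_seg (v i) (v (nxt n i)) s.
Definition arc_scale (i : nat) (s : R) : R :=
  arc_wt0 (v i) (v (nxt n i)) s + arc_wt1 (v i) (v (nxt n i)) s.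

Section OneArc.
Variables (i : nat) (s : R).
Hypotheses (ilt : (i < n)%N) (s01 : 0 <= s <= 1).

Lemma arc_scale_gt0 : 0 < arc_scale i s.
Proof. by rewrite /arc_scale arc_wt_sum_gt0 ?edge_neq. Qed.

Lemma sarcE :
  sarc sph_pt sph_dir sph_angle i s =
  scale3 (arc_scale i s) (homog (pedge n v i (seg_time i s))).
Proof. by rewrite /sarc /sph_pt /sph_dir /sph_angle arcE ?arc_segE ?edge_neq. Qed.

Lemma stangE : stang sph_pt sph_dir sph_angle i s =
  add3 (scale3 (tan_wt0 (v i) (v (nxt n i)) s + tan_wt1 (v i) (v (nxt n i)) s)
                (homog (pedge n v i (seg_time i s))))
       (scale3 (tan_seg_coef (v i) (v (nxt n i)) s) ((pdir n v i).1, (pdir n v i).2, 0)).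
Proof. by rewrite /stang /sph_pt /sph_dir /sph_angle tangentE ?tangent_segE ?edge_neq. Qed.

Lemma seg_time_itv : 0 <= seg_time i s <= 1.
Proof. by rewrite /seg_time arc_to_seg_ge0 ?arc_to_seg_le1 ?edge_neq. Qed.

End OneArc.

Lemma param_seg_time i s : param n i s -> param n i (seg_time i s).
Proof.
move=> [ilt /andP[s0 s1]]; have s01 : 0 <= s <= 1 by rewrite s0 ltW.
by split => //; rewrite /seg_time arc_to_seg_ge0 ?arc_to_seg_lt1 ?edge_neq.
Qed.

Lemma seg_time_surj i t : param n i t -> exists s, param n i s /\ seg_time i s = t.
Proof.
move=> [ilt /andP[t0 t1]]; have zz' := edge_neq ilt.
have [s s01 st] : exists2 s, s \in `[0, 1]%R & seg_time i s = t.
  apply: (@IVT R (seg_time i) 0 1 t); first exact: ler01.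
    apply: continuous_in_subspaceT => x; rewrite inE /= in_itv /=.
    exact: continuous_arc_to_seg.
  by rewrite /seg_time arc_to_seg0 arc_to_seg1 // /Num.min /Num.max ltr01 /= t0 ltW.
move: s01; rewrite in_itv /= => /andP[s0 s1]; exists s; split => //; split => //.
rewrite s0 lt_neqAle s1 andbT; apply: contraTneq t1 => s_eq1; subst s.
by rewrite -st /seg_time arc_to_seg1 ?ltxx.
Qed.

Lemma seg_time_inj i s s' : param n i s -> param n i s' ->
  seg_time i s = seg_time i s' -> s = s'.
Proof.
move=> [ilt /andP[s0 s1]] [_ /andP[t0 t1]].
by apply: arc_to_seg_inj; rewrite ?edge_neq ?s0 ?t0 ?ltW.
Qed.

Lemma param_neq_seg_time i s j t : param n i s -> param n j t -> (i, s) <> (j, t) ->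
  (i, seg_time i s) <> (j, seg_time j t).
Proof.
move=> ps pt ne [ij e]; subst j; apply: ne; congr (_, _).
exact: seg_time_inj ps pt e.
Qed.

Lemma sarc_eq_pedge i s j t : param n i s -> param n j t ->
  sarc sph_pt sph_dir sph_angle i s = sarc sph_pt sph_dir sph_angle j t ->
  pedge n v i (seg_time i s) = pedge n v j (seg_time j t).
Proof.
move=> [ilt /andP[s0 s1]] [jlt /andP[t0 t1]].
rewrite !sarcE ?s0 ?t0 ?ltW //; apply: scale3_homog_inj.
by rewrite gt_eqF // arc_scale_gt0 // s0 ltW.
Qed.

(* At a common point [homog q] of two arcs, [dot3 (T1 x T2) (homog q)] only sees the
   segment components of the tangents, which gives the planar determinant. *)
Lemma cross_stang_neq0 i s j t : param n i s -> param n j t ->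
  sarc sph_pt sph_dir sph_angle i s = sarc sph_pt sph_dir sph_angle j t ->
  det2 (pdir n v i) (pdir n v j) != 0 ->
  cross3 (stang sph_pt sph_dir sph_angle i s) (stang sph_pt sph_dir sph_angle j t)
    != (0, 0, 0).
Proof.
move=> ps pt e det_neq0; have eq := sarc_eq_pedge ps pt e.
case: ps pt => [ilt /andP[s0 s1]] [jlt /andP[t0 t1]].
have s01 : 0 <= s <= 1 by rewrite s0 ltW.
have t01 : 0 <= t <= 1 by rewrite t0 ltW.
rewrite stangE // stangE // -eq; apply: contra_neq det_neq0 => cross0.
move: (dot3_cross_homog (pedge n v i (seg_time i s)) (pdir n v i) (pdir n v j)
  (tan_wt0 (v i) (v (nxt n i)) s + tan_wt1 (v i) (v (nxt n i)) s)
  (tan_seg_coef (v i) (v (nxt n i)) s)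
  (tan_wt0 (v j) (v (nxt n j)) t + tan_wt1 (v j) (v (nxt n j)) t)
  (tan_seg_coef (v j) (v (nxt n j)) t)).
rewrite cross0 /dot3 /= !mul0r !addr0 => /esym /eqP.
rewrite !mulf_eq0 !(negbTE (tan_seg_coef_neq0 (edge_neq _) _)) //=.
by move/eqP.
Qed.

Lemma spherical_stick_curve_of_planar : planar_stick_curve n v ->
  spherical_stick_curve n sph_pt sph_dir sph_angle.
Proof.
move=> [n_gt0 [transverse no_triple]]; split => //; split; last split.
- move=> i ilt; have zz' := edge_neq ilt; have /andP[a0 api] := arc_angle_itv zz'.
  split; [exact: gnomonic_unit | exact: arc_dir_unit | exact: gnomonic_arc_dir_orth | |].
    by rewrite /sph_angle a0 /=; have := pi_gt0 R; lra.
  by rewrite /sarc mul1r arc_end.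
- move=> i s j t ps pt ne e.
  have [s0 t0 det_neq0] := transverse _ _ _ _ (param_seg_time ps) (param_seg_time pt)
    (param_neq_seg_time ps pt ne) (sarc_eq_pedge ps pt e).
  have pos i' s' : param n i' s' -> 0 < seg_time i' s' -> 0 < s'.
    move=> [_ /andP[s'0 _]] pos; rewrite lt_neqAle s'0 andbT.
    by apply: contraTneq pos => s'_eq0; subst s'; rewrite /seg_time arc_to_seg0 ltxx.
  by split; [exact: pos s0 | exact: pos t0 | exact: cross_stang_neq0].
- move=> i s j t k u ps pt pu nst nsu ntu [e1 e2].
  apply: (no_triple _ _ _ _ _ _ (param_seg_time ps) (param_seg_time pt) (param_seg_time pu)).
  + exact: param_neq_seg_time.
  + exact: param_neq_seg_time.
  + exact: param_neq_seg_time.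
  + by split; apply: sarc_eq_pedge.
Qed.

End SphericalCurve.

Section Radius.
Variable R : realType.
Local Notation pt3 := (R * R * R)%type.
Local Notation pt2 := (R * R)%type.

Lemma within_continuous_comp (A B : set R) (g h : R -> R) :
  (forall x, B x -> {for x, continuous g}) -> (forall x, B x -> A (g x)) ->
  {within A, continuous h} -> {within B, continuous (fun x => h (g x))}.
Proof.
move=> gc gBA hc; apply/subspace_continuousP => x Bx.
have hA := (@subspace_continuousP _ A _ h).1 hc (g x) (gBA x Bx).
move=> P hP; have := hA P hP; rewrite /= nbhs_simpl /= /within /= => hQ.
have := gc x Bx _ hQ; rewrite /= nbhs_simpl /=.
by apply: filterS => y hy By; exact: hy (gBA y By).
Qed.

Lemma shift_ge1 (n : nat) (h : nat -> R -> R) :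
  (forall i, (i < n)%N -> {within `[0, 1], continuous (h i)}) ->
  exists c : R, forall i s, (i < n)%N -> 0 <= s <= 1 -> 1 <= h i s + c.
Proof.
elim: n => [|n IH] hcont; first by exists 0.
have [c hc] := IH (fun i ilt => hcont i (ltnW ilt)).
have [m _ hmin] := EVT_min (@ler01 R) (hcont n (ltnSn n)).
exists (Num.max c (1 - h n m)) => i s; rewrite ltnS leq_eqVlt => /orP[/eqP -> | ilt] s01.
  have := hmin s; rewrite in_itv /= s01 => /(_ isT).
  have : 1 - h n m <= Num.max c (1 - h n m) by rewrite le_max lexx orbT.
  lra.
have := hc i s ilt s01.
have : c <= Num.max c (1 - h n m) by rewrite le_max lexx.
lra.
Qed.

Variables (n : nat) (v : nat -> pt2) (h : nat -> R -> R) (c : R).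
Hypothesis edge_neq : forall i, (i < n)%N -> v i != v (nxt n i).
Hypothesis h_shift : forall i s, (i < n)%N -> 0 <= s <= 1 -> 1 <= h i s + c.
Local Notation sph_arc := (sarc (sph_pt v) (sph_dir n v) (sph_angle n v)).
Local Notation planar_lift :=
  [set x | exists i s, param n i s /\ x = (pedge n v i s, h i s)].

Definition sph_radius (i : nat) (s : R) : R :=
  (h i (seg_time n v i s) + c) / arc_scale n v i s.

Lemma sph_radius_gt0 i s : (i < n)%N -> 0 <= s <= 1 -> 0 < sph_radius i s.
Proof.
move=> ilt s01; rewrite /sph_radius divr_gt0 ?arc_scale_gt0 //.
by have := h_shift ilt (seg_time_itv edge_neq ilt s01); lra.
Qed.

Lemma sph_radius_sarcE i s : (i < n)%N -> 0 <= s <= 1 ->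
  scale3 (sph_radius i s) (sph_arc i s) =
  push c 1 (pedge n v i (seg_time n v i s), h i (seg_time n v i s)).
Proof.
move=> ilt s01; rewrite sarcE // /sph_radius /push /push_scale clamp01_id ?lexx ?ler01 //.
have k0 : arc_scale n v i s != 0 by rewrite gt_eqF ?arc_scale_gt0.
rewrite subrr add0r !mul1r max_r ?h_shift ?seg_time_itv //.
by rewrite /scale3 /=; congr (_, _, _); field.
Qed.

Lemma sph_radius_continuous i : (i < n)%N -> {within `[0, 1], continuous (h i)} ->
  {within `[0, 1], continuous (sph_radius i)}.
Proof.
move=> ilt hcont; apply/subspace_continuousP => x x01.
have x01' : 0 <= x <= 1 by move: x01; rewrite /= in_itv.
have zz' := edge_neq ilt.
have hc : {within `[0, 1], continuous (fun s => h i (seg_time n v i s))}.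
  apply: within_continuous_comp hcont => y; rewrite /= in_itv /= => y01.
    exact: continuous_arc_to_seg.
  by rewrite /= in_itv /= seg_time_itv.
have k : {for x, continuous (fun s => (arc_scale n v i s)^-1)}.
  apply: continuousV; first by rewrite gt_eqF ?arc_scale_gt0.
  by apply: continuousD; [exact: continuous_arc_wt0 | exact: continuous_arc_wt1].
rewrite /sph_radius; apply: cvgM.
  apply: cvgD; last exact: cvg_cst.
  exact: (@subspace_continuousP _ _ _ (fun s => h i (seg_time n v i s))).1 hc x x01.
by apply: cvg_trans _ k; apply: cvg_fmap2; apply: cvg_within.
Qed.

Lemma sph_radius_end i : (0 < n)%N -> (i < n)%N -> h i 1 = h (nxt n i) 0 ->
  sph_radius i 1 = sph_radius (nxt n i) 0.
Proof.
move=> n_gt0 ilt hend; have jlt : (nxt n i < n)%N by rewrite ltn_mod.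
rewrite /sph_radius /seg_time /arc_scale arc_to_seg1 ?arc_to_seg0 ?edge_neq //.
by rewrite arc_wt0_1 ?arc_wt1_1 ?arc_wt0_0 ?arc_wt1_0 ?edge_neq // add0r addr0 hend.
Qed.

Lemma sph_radius_inj i s j t : param n i s -> param n j t ->
  (forall i s j t, param n i s -> param n j t ->
     (pedge n v i s, h i s) = (pedge n v j t, h j t) -> (i, s) = (j, t)) ->
  scale3 (sph_radius i s) (sph_arc i s) = scale3 (sph_radius j t) (sph_arc j t) ->
  (i, s) = (j, t).
Proof.
move=> ps pt lift_inj; have [ilt /andP[s0 s1]] := ps; have [jlt /andP[t0 t1]] := pt.
rewrite !sph_radius_sarcE ?s0 ?t0 ?ltW // => /(can_inj (pushK c 1)).
move=> /(lift_inj _ _ _ _ (param_seg_time edge_neq ps) (param_seg_time edge_neq pt)) [ij e].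
by subst j; congr (_, _); exact: seg_time_inj e.
Qed.

Lemma spherical_liftE :
  [set x | exists i s, param n i s /\ x = scale3 (sph_radius i s) (sph_arc i s)] =
  push c 1 @` planar_lift.
Proof.
apply/seteqP; split => [_ [i [s [ps ->]]] | _ [_ [i [t [pt ->]]] <-]].
  have [ilt /andP[s0 s1]] := ps; rewrite sph_radius_sarcE ?s0 ?ltW //.
  by exists (pedge n v i (seg_time n v i s), h i (seg_time n v i s)) => //;
    exists i, (seg_time n v i s); split => //; exact: param_seg_time.
have [s [ps <-]] := seg_time_surj edge_neq pt.
have [ilt /andP[s0 s1]] := ps.
by exists i, s; split => //; rewrite sph_radius_sarcE ?s0 ?ltW.
Qed.

End Radius.

Theorem theorem3p2 (R : realType) (K : set (R * R * R)) :
  nontrivial_knot K ->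
  forall n : nat, planar_stick_diagram_of K n ->
  exists m : nat, (m <= n)%N /\ spherical_stick_diagram_of K m.
Proof.
(* Nontriviality only makes sps[K] defined; the construction does not use it. *)
move=> _ n [v [curve [h [hcont [hend [lift_inj iso]]]]]].
have edge_neq := planar_edge_neq curve.
have [c h_shift] := shift_ge1 hcont.
exists n; split => //.
exists (sph_pt v), (sph_dir n v), (sph_angle n v).
split; first exact: spherical_stick_curve_of_planar.
exists (sph_radius n v h c); split; last split; last split; last split.
- by move=> i ilt; apply: sph_radius_continuous => //; exact: hcont.
- by move=> i s ilt s01; apply: sph_radius_gt0.
- by move=> i ilt; apply: sph_radius_end => //; [case: curve | exact: hend].
- by move=> i s j t ps pt; apply: sph_radius_inj.
- rewrite spherical_liftE //; exact: ambient_isotopic_trans (ambient_isotopic_push _ _) iso.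
Qed.
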